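(* Let $E$ be a countable set, $\Omega=[0,1]^E$ with its Borel $\sigma$-field $\mathcal F$ and the product $\mathbb P$ of uniform measures. Let $\mathcal A,\mathcal B\in\mathcal F$, $a,b\in(0,1)$, $s\in\mathbb N$, and let $\Phi:\mathcal A\to\mathcal B$ be measurable. Suppose that for every $\omega'\in\Phi(\mathcal A)$ there is a set $S=S(\omega')\subset E$ with at most $s$ elements such that $$\Phi^{-1}(\omega')\subset\{\omega:\omega|_{S^c}=\omega'|_{S^c}\}\cap\bigcup_{L\subset S}\Big(\{\omega:\omega|_L=\tfrac1a\,\omega'|_L\}\cap\{\omega:\omega|_{S\setminus L}=\tfrac{\omega'-b}{1-b}\big|_{S\setminus L}\}\Big).$$ Then $\mathbb P[\mathcal A]\le\Big(\frac{2}{a\wedge(1-b)}\Big)^s\mathbb P[\mathcal B]$.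
   Context: For $\omega\in[0,1]^E$ and $S\subset E$, $\omega|_S$ denotes the restriction of $\omega$ to $S$; arithmetic operations on restrictions act coordinatewise. *)

From HB Require Import structures.
From mathcomp Require Import all_boot all_order all_algebra.
From mathcomp Require Import all_classical all_reals all_analysis.
Set Implicit Arguments. Unset Strict Implicit. Unset Printing Implicit Defensive.
Import Order.TTheory GRing.Theory Num.Theory.
Import numFieldNormedType.Exports.
Local Open Scope classical_set_scope.
Local Open Scope ring_scope.

Definition coord_sets (E : Type) (R : realType) : set (set (E -> R)) :=
  [set A | exists (e : E) (B : set R), measurable B /\ A = (fun w => w e) @^-1` B].

Notation Omega E R := (g_sigma_algebraType (@coord_sets E R)).

Definition cube (E : Type) (R : realType) : set (Omega E R) :=
  [set w | forall e, 0 <= w e <= 1].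

(* distribution function of the uniform law on [0,1] *)
Definition clamp01 (R : realType) (t : R) : R := Num.min 1 (Num.max 0 t).

(* P is the product of the uniform measures on [0,1], one for each coordinate:
   its finite-dimensional distributions are those of independent uniform
   variables on [0,1]. (These cylinder sets form a pi-system generating the
   product sigma-field, so this determines P uniquely.) *)
Definition uniform_product (E : countType) (R : realType)
  (P : probability (Omega E R) R) : Prop :=
  forall (F : seq E) (x : E -> R),
    P [set w | forall e, e \in F -> w e <= x e] =
    (\prod_(e <- undup F) clamp01 (x e))%:E.

From HB Require Import structures.
From mathcomp Require Import all_boot all_order all_algebra.
From mathcomp Require Import all_classical all_reals all_analysis.
From mathcomp Require Import ring lra measurable_realfun.
Import Order.TTheory GRing.Theory Num.Theory.
Import numFieldNormedType.Exports.
Local Open Scope classical_set_scope.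
Local Open Scope ring_scope.
Set Implicit Arguments. Unset Strict Implicit.

(* For a pair (S, L) with S of size at most s, let T be the affine map that
   multiplies the coordinates in L by a, maps those in S \ L by
   y |-> (1 - b) y + b and fixes the others.  The hypothesis says that A is
   covered by the countably many pieces {w in A | Phi w = T w}.  On the unit
   cube T multiplies P-measure by the product of its slopes, which is at
   least m^s with m = min(a, 1 - b), so every (disjointified) piece has
   measure at most m^-s times that of its image under Phi.  The images lie
   in B, and a point w' of Phi(A) lies in at most 2^s of them, since a
   preimage of w' is determined by the coordinates of S(w') it multiplies
   by 1/a.  Summing, P(A) <= m^-s 2^s P(B). *)

Section clamp01.
Variable R : realType.
Implicit Types x y t c d : R.

Lemma ler_clamp01 x y : x <= y -> clamp01 x <= clamp01 y.
Proof. by move=> xy; rewrite /clamp01 le_min2// le_max2. Qed.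

Lemma clamp01_id t : 0 <= t <= 1 -> clamp01 t = t.
Proof. by case/andP=> t0 t1; rewrite /clamp01 (max_r t0) (min_r t1). Qed.

Lemma clamp01_le0 t : t <= 0 -> clamp01 t = 0.
Proof. by move=> t0; rewrite /clamp01 (max_l t0) min_r. Qed.

Lemma clamp01_ge1 t : 1 <= t -> clamp01 t = 1.
Proof. by move=> t1; rewrite /clamp01 max_r ?(le_trans _ t1)// min_l. Qed.

Definition uniform_len c d := Num.max 0 (clamp01 d - clamp01 c).

Lemma uniform_len_affine (al be y : R) : 0 < al -> 0 <= be -> al + be <= 1 ->
  y <= 1 -> uniform_len be (al * y + be) = al * uniform_len 0 y.
Proof.
rewrite /uniform_len => al0 be0 albe y1.
have cbe : clamp01 be = be by rewrite clamp01_id // be0 /=; lra.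
rewrite (clamp01_le0 (lexx 0)) subr0 cbe.
have [y0|y0] := leP y 0.
  rewrite (clamp01_le0 y0) maxxx mulr0 max_l // subr_le0 -{2}cbe ler_clamp01 //.
  nra.
rewrite (clamp01_id (t := y)) ?(ltW y0) //.
rewrite clamp01_id; last by apply/andP; split; nra.
by rewrite addrK !max_r //; [exact: ltW | nra].
Qed.

End clamp01.

Section boxes.
Variables (R : realType) (E : countType).
Local Notation O := (Omega E R).

Lemma measurable_coord (e : E) : measurable_fun setT (fun w : O => w e).
Proof. by move=> _ B mB; rewrite setTI; apply: sub_sigma_algebra; exists e, B. Qed.

Lemma measurable_coords (U : seq E) (B : E -> set R) :
  (forall e, measurable (B e)) ->
  measurable [set w : O | forall e, e \in U -> B e (w e)].
Proof.
move=> mB; elim: U => [|e U IH].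
  by rewrite (_ : [set w : O | _] = setT); [|apply/seteqP; split=> w].
rewrite (_ : [set w : O | _] = (fun w : O => w e) @^-1` B e `&`
                              [set w : O | forall e, e \in U -> B e (w e)]).
  by apply: measurableI => //; rewrite -[X in measurable X]setTI;
     exact: measurable_coord.
apply/seteqP; split=> w /=.
  by move=> h; split => [|x xU]; apply: h; rewrite inE ?eqxx ?xU ?orbT.
by move=> [h1 h2] x; rewrite inE => /orP[/eqP->//|/h2].
Qed.

Definition box (U F : seq E) (u c d : E -> R) : set O :=
  [set w | (forall e, e \in U -> w e <= u e) /\
           (forall e, e \in F -> c e < w e <= d e)].

Lemma measurable_box U F u c d : measurable (box U F u c d).
Proof.
rewrite (_ : box _ _ _ _ _ =
   [set w : O | forall e, e \in U -> [set y : R | y <= u e] (w e)] `&`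
   [set w : O | forall e, e \in F -> [set y : R | c e < y <= d e] (w e)]) //.
apply: measurableI.
  apply: (@measurable_coords U (fun e => [set y | y <= u e])) => e.
  rewrite (_ : [set y | _] = `]-oo, u e]%classic); first exact: measurable_itv.
  by apply/seteqP; split=> y /=; rewrite in_itv.
apply: (@measurable_coords F (fun e => [set y | c e < y <= d e])) => e.
rewrite (_ : [set y | _] = `]c e, d e]%classic); first exact: measurable_itv.
by apply/seteqP; split=> y /=; rewrite in_itv.
Qed.

Lemma box_cons_setD U F u c d e : e \notin U ->
  box U (e :: F) u c d =
  box (e :: U) F [eta u with e |-> d e] c d `\`
  box (e :: U) F [eta u with e |-> c e] c d.
Proof.
move=> eU; apply/seteqP; split=> w /=.
  move=> [h1 h2]; have /andP[ce_we we_de] := h2 e (mem_head _ _).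
  split; last by move=> [/(_ e (mem_head _ _)) /=]; rewrite eqxx leNgt ce_we.
  split=> [x|x xF]; last by apply: h2; rewrite inE xF orbT.
  by rewrite inE /=; case: eqP => [-> _ //|_ /= /h1].
move=> [[h1 h2] nY]; have := h1 e (mem_head _ _); rewrite /= eqxx => we_de.
split=> [x xU|x].
  have := h1 x; rewrite inE xU orbT /=.
  by case: eqP => [xe|_]; [move: eU; rewrite -xe xU|apply].
rewrite inE => /orP[/eqP->|/h2//]; rewrite we_de andbT ltNge.
apply/negP => we_ce; apply: nY; split => // y.
rewrite inE /=; case: eqP => [-> _ //|ne /= yU].
by have := h1 y; rewrite inE yU orbT /= (introF eqP ne); apply.
Qed.

Variable P : probability O R.
Hypothesis hP : uniform_product P.

Lemma uniform_product_box (F U : seq E) (u c d : E -> R) : uniq F ->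
  all (fun e => e \notin U) F ->
  P (box U F u c d) =
  (\prod_(e <- undup U) clamp01 (u e) *
   \prod_(e <- F) uniform_len (c e) (d e))%:E.
Proof.
elim: F U u => [|e F IH] U u.
  move=> _ _; rewrite big_nil mulr1 -hP; congr (P _).
  by apply/seteqP; split=> w /=; [case|split].
rewrite cons_uniq => /andP[eF uF] /= /andP[eU aF].
have [dc|cd] := leP (d e) (c e).
  rewrite (_ : box _ _ _ _ _ = set0); last first.
    apply/seteqP; split=> w //= [_ /(_ e (mem_head _ _)) /andP[h1 h2]].
    by move: (lt_le_trans h1 h2); rewrite ltNge dc.
  rewrite measure0 big_cons /uniform_len max_l ?mul0r ?mulr0 //.
  by rewrite subr_le0 ler_clamp01.
have aF' : all (fun x => x \notin e :: U) F.
  apply/allP => x xF; rewrite inE negb_or (allP aF x xF) andbT.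
  by apply: contraNneq eF => <-.
set X := box (e :: U) F [eta u with e |-> d e] c d.
set Y := box (e :: U) F [eta u with e |-> c e] c d.
have YX : Y `<=` X.
  move=> w [h1 h2]; split => // x /h1; rewrite /=.
  by case: eqP => // _ /le_trans; apply; exact: ltW.
have PX_finite : (P X < +oo)%E.
  by apply: (le_lt_trans (probability_le1 _ (measurable_box _ _ _ _ _)));
     rewrite ltry.
rewrite box_cons_setD // -/X -/Y.
rewrite (measureD (measurable_box _ _ _ _ _) (measurable_box _ _ _ _ _) PX_finite).
rewrite (setIidr YX) -[Z in (Z - _)%E]/(P X) -[Z in (_ - Z)%E]/(P Y).
rewrite /X /Y !IH // -EFinB; congr (_%:E).
have eU' : undup (e :: U) = e :: undup U by rewrite /= (negbTE eU).
have uU (x : R) : \prod_(j <- undup U) clamp01 ([eta u with e |-> x] j) =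
                  \prod_(j <- undup U) clamp01 (u j).
  apply: eq_big_seq => j; rewrite mem_undup /=.
  by case: eqP => // -> eU1; move: eU; rewrite eU1.
rewrite eU' !big_cons /= !eqxx !uU /uniform_len.
rewrite (max_r (_ : 0 <= _)); last by rewrite subr_ge0 ler_clamp01 // ltW.
ring.
Qed.

End boxes.

Lemma affine_inv_itv (R : realFieldType) (a b c d y : R) : 0 < a ->
  (c < a^-1 * y + - b / a <= d) = (a * c + b < y <= a * d + b).
Proof.
move=> a0; have -> : a^-1 * y + - b / a = (y - b) / a by field; rewrite gt_eqF.
rewrite ltr_pdivlMr // ler_pdivrMr //.
by apply/idP/idP => /andP[h1 h2]; apply/andP; split; lra.
Qed.

Section affine.
Variables (R : realType) (E : countType).
Local Notation O := (Omega E R).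
Implicit Types al be : E -> R.

Definition affine al be (w : O) : O := fun e => al e * w e + be e.

Definition affine_inv al be : O -> O :=
  affine (fun e => (al e)^-1) (fun e => - be e / al e).

Lemma measurable_affine al be : measurable_fun setT (affine al be).
Proof.
apply: (@measurability _ _ O O setT _ (@coord_sets E R)) => //.
move=> _ [X [e [B [mB ->]]] <-]; rewrite setTI.
have mg : measurable_fun setT (fun y : R => al e * y + be e).
  by apply: measurable_funD => //; apply: measurable_funM.
rewrite (_ : _ @^-1` _ = (fun w : O => w e) @^-1`
                        ((fun y => al e * y + be e) @^-1` B)) //.
rewrite -[X in measurable X]setTI; apply: (measurable_coord e measurableT).
by rewrite -[X in measurable X]setTI; exact: mg.
Qed.

Lemma affine_invK al be : (forall e, al e != 0) ->
  cancel (affine_inv al be) (affine al be).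
Proof. by move=> al0 w; apply/funext => e; rewrite /affine_inv /affine; field. Qed.

Lemma affine_inv_id_out al be e (w : O) : al e = 1 -> be e = 0 ->
  affine_inv al be w e = w e.
Proof.
by rewrite /affine_inv /affine => -> ->; rewrite invr1 mul1r oppr0 mul0r addr0.
Qed.

Definition orthant (F : seq E) (x : E -> R) : set O := box F [::] x x x.

Definition orthants : set (set O) := [set A | exists F x, A = orthant F x].

Lemma orthants_measurable : orthants `<=` measurable.
Proof. by move=> _ [F [x ->]]; exact: measurable_box. Qed.

Lemma orthants_setI_closed : setI_closed orthants.
Proof.
move=> _ _ [F [x ->]] [F' [x' ->]].
exists (F ++ F'), (fun e => if e \in F then
  (if e \in F' then Num.min (x e) (x' e) else x e) else x' e).
apply/seteqP; split => w /=.
  move=> [[h1 _] [h2 _]]; split => // e; rewrite mem_cat.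
  case eF: (e \in F); case eF': (e \in F') => //= _.
  - by rewrite le_min h1 ?h2.
  - exact: h1.
  - exact: h2.
move=> [h _]; split; split => // e eF; have := h e; rewrite mem_cat eF ?orbT.
  by move=> /(_ isT); case: (e \in F') => //; rewrite le_min => /andP[].
by move=> /(_ isT); case: (e \in F) => //; rewrite le_min => /andP[].
Qed.

Lemma measurable_orthants_generated (X : set O) :
  measurable X -> <<s orthants >> X.
Proof.
pose GT := g_sigma_algebraType orthants.
have measurable_coord_GT e : measurable_fun (setT : set GT) (fun w : GT => (w : E -> R) e).
  apply: (@measurability _ _ GT R setT _ (@ocitv R)) => //.
  move=> _ [_ [[x1 x2] _ <-] <-]; rewrite setTI.
  have -> : (fun w : GT => (w : E -> R) e) @^-1` `]x1, x2]%classic =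
      orthant [:: e] (fun _ => x2) `\` orthant [:: e] (fun _ => x1).
    apply/seteqP; split => w /=; rewrite in_itv /=.
      move=> /andP[h1 h2]; split; first by split => // e'; rewrite inE => /eqP->.
      by move=> [/(_ e (mem_head _ _))]; rewrite leNgt h1.
    move=> [[h1 _] h2]; rewrite h1 ?mem_head // andbT ltNge.
    by apply/negP => h; apply: h2; split => // e'; rewrite inE => /eqP->.
  by apply: (@measurableD _ GT); apply: sub_sigma_algebra; do 2 eexists.
move=> mX; apply: (smallest_sub (smallest_sigma_algebra setT orthants) _ mX).
by move=> _ [e [B [mB ->]]]; have := measurable_coord_GT e measurableT B mB; rewrite setTI.
Qed.

Variable P : probability O R.
Hypothesis hP : uniform_product P.

Variables (S : seq E) (al be : E -> R).
Hypotheses (uS : uniq S) (al_gt0 : forall e, 0 < al e)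
  (al_out : forall e, e \notin S -> al e = 1)
  (be_out : forall e, e \notin S -> be e = 0)
  (be_ge0 : forall e, 0 <= be e) (albe_le1 : forall e, e \in S -> al e + be e <= 1).

Local Notation T := (affine_inv al be).

Let Q : set O := box [::] S (fun _ => 0) (fun _ => 0) (fun _ => 1).

Let mQ : measurable Q. Proof. exact: measurable_box. Qed.

Let mT : measurable_fun setT T. Proof. exact: measurable_affine. Qed.

Let measurable_preimage_T X : measurable X -> measurable (T @^-1` X).
Proof. by move=> mX; rewrite -[X in measurable X]setTI; exact: mT. Qed.

Let PQ : P Q = 1%E.
Proof.
rewrite /Q uniform_product_box //; last by apply/allP.
rewrite big_nil mul1r big1 // => e _.
by rewrite /uniform_len clamp01_ge1 // clamp01_le0 // subr0 max_r.
Qed.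

Let orthantQE F x : orthant F x `&` Q =
  box [seq e <- F | e \notin S] S x (fun _ => 0)
      (fun e => if e \in F then Num.min 1 (x e) else 1).
Proof.
apply/seteqP; split => w /=.
  move=> [[h1 _] [_ h2]]; split.
    by move=> e; rewrite mem_filter => /andP[_ /h1].
  move=> e eS; have /andP[-> h] := h2 e eS; rewrite /=.
  by case eF: (e \in F) => //; rewrite le_min h h1.
move=> [h1 h2]; split; split => // e eF.
  case eS: (e \in S); last by apply: h1; rewrite mem_filter eS eF.
  by have /andP[_] := h2 e eS; rewrite eF le_min => /andP[].
have /andP[-> h] := h2 e eF; rewrite /=; apply: (le_trans h).
by case: (e \in F) => //; rewrite ge_min lexx.
Qed.

Let preimage_orthantQE F x : T @^-1` (orthant F x `&` Q) =
  box [seq e <- F | e \notin S] S x be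
    (fun e => al e * (if e \in F then Num.min 1 (x e) else 1) + be e).
Proof.
have T_out e w : e \in [seq e <- F | e \notin S] -> T w e = w e.
  by rewrite mem_filter => /andP[eS _]; rewrite affine_inv_id_out ?al_out ?be_out.
rewrite orthantQE; apply/seteqP; split => w /= [h1 h2]; split => e eU.
- by rewrite -T_out //; apply: h1.
- by have := h2 e eU; rewrite affine_inv_itv // mulr0 add0r.
- by rewrite T_out //; apply: h1.
- by rewrite affine_inv_itv // mulr0 add0r; apply: h2.
Qed.

Let J := \prod_(e <- S) al e.
Let J_ge0 : 0 <= J. Proof. by apply: prodr_ge0 => e _; apply: ltW. Qed.

Let pushforward_restr_orthant F x :
  P (T @^-1` (orthant F x `&` Q)) = (J%:E * P (orthant F x `&` Q))%E.
Proof.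
have filterS : all (fun e => e \notin [seq e <- F | e \notin S]) S.
  by apply/allP => e eS; rewrite mem_filter eS.
rewrite preimage_orthantQE orthantQE !uniform_product_box // -EFinM.
pose y e := if e \in F then Num.min 1 (x e) else 1.
congr (_%:E); rewrite (@eq_big_seq _ _ _ _ S
  (fun e => uniform_len (be e) (al e * y e + be e))
  (fun e => al e * uniform_len 0 (y e))); last first.
  move=> e eS; apply: uniform_len_affine => //; first exact: albe_le1.
  by rewrite /y; case: (e \in F) => //; rewrite ge_min lexx.
by rewrite big_split /= /J; ring.
Qed.

Lemma uniform_product_affine_image (D : set O) : measurable D ->
  (J%:E * P D <= P (T @^-1` D))%E.
Proof.
move=> mD.
have PD : P D = P (D `&` Q).
  rewrite (measureDI P mD mQ) (subset_measure0 (B := ~` Q)) ?add0e //.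
  - exact: measurableD.
  - exact: measurableC.
  - by have := probability_setC P mQ; rewrite PQ subee.
have push_restr : mrestr (pushforward P T) mQ D =
                   mscale (NngNum J_ge0) (mrestr P mQ) D.
  apply: (@g_sigma_algebra_measure_unique _ _ _ _ orthants_measurable
    (fun _ => setT) _ _ (mrestr (pushforward P T) mQ)
    (mscale (NngNum J_ge0) (mrestr P mQ)) orthants_setI_closed).
  - by move=> _; exists [::], (fun _ => 0); apply/seteqP; split.
  - by apply/seteqP; split => // w _; exists 0%N.
  - by move=> _ [F [x ->]]; exact: pushforward_restr_orthant.
  - move=> _; rewrite /mrestr /pushforward; apply: (@le_lt_trans _ _ 1%E).
      apply: probability_le1; apply: measurable_preimage_T; exact: measurableI.
    by rewrite ltry.
  - exact: measurable_orthants_generated.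
move: push_restr; rewrite PD /mrestr /pushforward /mscale /= => <-.
apply: le_measure; rewrite ?inE; last by move=> w [].
- by apply: measurable_preimage_T; exact: measurableI.
- exact: measurable_preimage_T.
Qed.

End affine.

Section measure_by_pieces.
Local Open Scope ereal_scope.
Context d (T : measurableType d) (R : realType).
Variable mu : {measure set T -> \bar R}.

Lemma nneseries_measure_le_multiplicity (B : set T) (C : nat -> set T) (N : nat) :
  measurable B -> (forall k, measurable (C k)) -> (forall k, C k `<=` B) ->
  (forall x n, (\sum_(k < n) \1_(C k) x <= N%:R :> R)%R) ->
  \sum_(k <oo) mu (C k) <= N%:R%:E * mu B.
Proof.
move=> mB mC CB multC.
have indic_ge0 (D : set T) x : 0 <= (\1_D x : R)%:E by rewrite lee_fin.
have pointwise x : \sum_(k <oo) (\1_(C k) x : R)%:E <= (N%:R * \1_B x : R)%:E.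
  have [Bx|nBx] := pselect (B x).
    rewrite indicE mem_set // mulr1.
    apply: lime_le; first exact: is_cvg_nneseries.
    by apply: nearW => n; rewrite sumEFin lee_fin big_mkord.
  rewrite eseries0; first by rewrite lee_fin mulr_ge0 // indicE ler0n.
  by move=> k _ _; rewrite indicE memNset // => /CB.
have mC1 k : measurable_fun setT (fun x => (\1_(C k) x : R)%:E).
  by apply/measurable_EFinP; exact: measurable_indic.
apply: (@le_trans _ _ (\int[mu]_(x in setT) (N%:R * \1_B x : R)%:E)).
  rewrite -(@eq_eseriesr _ (fun k => \int[mu]_(x in setT) (\1_(C k) x : R)%:E));
    last by move=> k _; rewrite integral_indic // setIT.
  rewrite -integral_nneseries //; apply: ge0_le_integral => //.
  - by move=> x _; exact: nneseries_ge0.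
  - exact: (@ge0_emeasurable_sum _ _ _ setT (fun k x => (\1_(C k) x : R)%:E)).
  - by apply/measurable_EFinP; apply: measurable_funM => //; exact: measurable_indic.
rewrite (integralZl_indic _ (fun _ => B)) //; last first.
  by move=> h; move: h; rewrite ltNge ler0n.
by rewrite integral_indic // setIT.
Qed.

Lemma measure_le_by_pieces (A B : set T) (D C : nat -> set T) (c : R) (N : nat) :
  (forall k, measurable (D k)) -> trivIset setT D -> A = \bigcup_k D k ->
  (0 <= c)%R -> (forall k, mu (D k) <= c%:E * mu (C k)) ->
  measurable B -> (forall k, measurable (C k)) -> (forall k, C k `<=` B) ->
  (forall x n, (\sum_(k < n) \1_(C k) x <= N%:R :> R)%R) ->
  mu A <= (c * N%:R)%:E * mu B.
Proof.
move=> mD tD -> c0 DC mB mC CB multC.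
rewrite measure_bigcup // (@eq_eseriesl _ _ xpredT) => [|k]; last by rewrite in_setT.
apply: (@le_trans _ _ (\sum_(k <oo) (c%:E * mu (C k)))).
  exact: lee_nneseries.
rewrite nneseriesZl // EFinM -muleA.
by apply: lee_wpmul2l; [rewrite lee_fin|exact: nneseries_measure_le_multiplicity].
Qed.

End measure_by_pieces.

Section pieces.
Variables (R : realType) (E : countType).
Local Notation O := (Omega E R).
Variables (A B : set O) (a b : R) (s : nat) (Phi : O -> O).
Hypotheses (ha : 0 < a < 1) (hb : 0 < b < 1).

Definition piece_scale (p : seq E * seq E) (e : E) : R :=
  if e \in p.1 then (if e \in p.2 then a else 1 - b) else 1.

Definition piece_shift (p : seq E * seq E) (e : E) : R :=
  if e \in p.1 then (if e \in p.2 then 0 else b) else 0.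

Local Notation T p := (affine (piece_scale p) (piece_shift p)).
Local Notation Tinv p := (affine_inv (piece_scale p) (piece_shift p)).
Local Notation m := (Num.min a (1 - b)).

Definition admissible (p : seq E * seq E) : bool := uniq p.1 && (size p.1 <= s)%N.

Definition piece (p : seq E * seq E) : set O :=
  if admissible p then [set w | A w /\ Phi w = T p w] else set0.

Definition piece_index (k : nat) : seq E * seq E := odflt ([::], [::]) (unpickle k).

Definition disjoint_piece : nat -> set O := seqDU (piece \o piece_index).

Definition piece_image (k : nat) : set O :=
  Tinv (piece_index k) @^-1` disjoint_piece k.

Lemma piece_scale_gt0 p e : 0 < piece_scale p e.
Proof.
by rewrite /piece_scale; case/andP: ha; case/andP: hb;
   case: ifP => _; [case: ifP => _|]; lra.
Qed.

Lemma piece_scale_ge p e : m <= piece_scale p e.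
Proof.
rewrite /piece_scale; case: ifP => _.
  by case: ifP => _; rewrite ge_min lexx ?orbT.
by rewrite ge_min; case/andP: ha => _ /ltW ->.
Qed.

Lemma prod_piece_scale_ge p : admissible p ->
  m ^+ s <= \prod_(e <- p.1) piece_scale p e.
Proof.
case/andP=> _ sp; have m_gt0 : 0 < m.
  by rewrite lt_min subr_gt0; case/andP: ha => -> _; case/andP: hb.
have m_le1 : m <= 1 by rewrite ge_min; case/andP: ha => _ /ltW ->.
apply: (@le_trans _ _ (m ^+ size p.1)).
  rewrite -(subnKC sp) exprD; apply: ler_piMr; first exact: exprn_ge0 (ltW m_gt0).
  exact: exprn_ile1 (ltW m_gt0) m_le1.
elim: p.1 => [|e r IH]; first by rewrite big_nil expr0.
rewrite big_cons exprS; apply: ler_pM => //; first exact: ltW.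
  exact: exprn_ge0 (ltW m_gt0).
exact: piece_scale_ge.
Qed.

Lemma affine_piece_invK p : cancel (Tinv p) (T p).
Proof. by apply: affine_invK => e; rewrite gt_eqF // piece_scale_gt0. Qed.

Hypotheses (mA : measurable A) (mPhi : measurable_fun A Phi).

Lemma measurable_piece p : measurable (piece p).
Proof.
rewrite /piece; case: ifP => _; last exact: measurable0.
pose Z n : set O := if (unpickle n : option E) is Some e then
  A `&` (fun w => Phi w e - T p w e) @^-1` [set 0] else setT.
have mZ n : measurable (Z n).
  rewrite /Z; case: (unpickle n) => [e|]; last exact: measurableT.
  apply: measurable_funB; [|apply: measurable_funTS|exact: mA|exact: measurable_set1].
    exact: measurableT_comp (measurable_coord e) mPhi.
  exact: measurableT_comp (measurable_coord e) (measurable_affine _ _).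
rewrite (_ : [set w | _] = A `&` \bigcap_n Z n).
  by apply: measurableI => //; exact: bigcapT_measurable.
apply/seteqP; split => w /= [Aw wP]; split => //.
  by move=> n _; rewrite /Z; case: (unpickle n) => // e; rewrite /= wP subrr.
apply/funext => e; have := wP (pickle e) Logic.I; rewrite /Z pickleK.
by move=> [_ /= /eqP]; rewrite subr_eq0 => /eqP.
Qed.

Lemma measurable_disjoint_piece k : measurable (disjoint_piece k).
Proof.
apply: measurableD; first exact: measurable_piece.
by apply: bigsetU_measurable => i _; exact: measurable_piece.
Qed.

Lemma measurable_piece_image k : measurable (piece_image k).
Proof.
rewrite -[X in measurable X]setTI; apply: measurable_affine => //.
exact: measurable_disjoint_piece.
Qed.

Lemma piece_imageP k x : piece_image k x ->
  [/\ A (Tinv (piece_index k) x), Phi (Tinv (piece_index k) x) = x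
    & disjoint_piece k (Tinv (piece_index k) x)].
Proof.
move=> Dx; have [+ _] := Dx; rewrite /= /piece; case: ifP => // _ [Aw ->].
by rewrite affine_piece_invK.
Qed.

Lemma piece_image_sub k : Phi @` A `<=` B -> piece_image k `<=` B.
Proof.
by move=> PhiAB x /piece_imageP[Aw Pw _]; apply: PhiAB; exists (Tinv (piece_index k) x).
Qed.

Lemma disjoint_piece_le (P : probability O R) k : uniform_product P ->
  (P (disjoint_piece k) <= (m ^- s)%:E * P (piece_image k))%E.
Proof.
move=> hP; set p := piece_index k.
have m_gt0 : 0 < m ^+ s.
  by rewrite exprn_gt0 // lt_min subr_gt0; case/andP: ha => -> _; case/andP: hb.
have [adm_p|nadm_p] := boolP (admissible p); last first.
  have -> : disjoint_piece k = set0.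
    by apply/seteqP; split => w // [+ _]; rewrite /= /piece -/p (negbTE nadm_p).
  by rewrite measure0 mule_ge0 // lee_fin invr_ge0 ltW.
pose J := \prod_(e <- p.1) piece_scale p e.
have J_image : (J%:E * P (disjoint_piece k) <= P (piece_image k))%E.
  apply: uniform_product_affine_image => //.
  - by case/andP: adm_p.
  - exact: piece_scale_gt0.
  - by move=> e /negbTE ep; rewrite /piece_scale ep.
  - by move=> e /negbTE ep; rewrite /piece_shift ep.
  - by move=> e; rewrite /piece_shift; case/andP: hb => /ltW ? _; do 2?case: ifP.
  - move=> e ep; rewrite /piece_scale /piece_shift ep.
    by case/andP: ha => _ ?; case/andP: hb => ? _; case: ifP => _; lra.
  - exact: measurable_disjoint_piece.
have J_ge : m ^+ s <= J := prod_piece_scale_ge adm_p.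
have J_gt0 := lt_le_trans m_gt0 J_ge.
apply: (@le_trans _ _ (J^-1%:E * P (piece_image k))%E); first by rewrite lee_pdivlMl.
by apply: lee_wpmul2r => //; rewrite lee_fin lef_pV2 ?posrE.
Qed.

Hypothesis hS : forall w', (Phi @` A) w' ->
  exists S : seq E, (size S <= s)%N /\
    forall w, A w -> Phi w = w' ->
      (forall e, e \notin S -> w e = w' e) /\
      exists L : set E, L `<=` [set e | e \in S] /\
        (forall e, L e -> w e = a^-1 * w' e) /\
        (forall e, e \in S -> ~ L e -> w e = (w' e - b) / (1 - b)).

Lemma bigcup_piece : A = \bigcup_k piece (piece_index k).
Proof.
apply/seteqP; split => w; last by move=> [k _]; rewrite /piece; case: ifP => // _ [].
move=> Aw; have [S [sS /(_ w Aw erefl) [out [L [_ [inL notL]]]]]] :=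
  hS (ex_intro2 _ _ w Aw erefl).
pose p := (undup S, [seq e <- undup S | `[< L e >]]).
exists (pickle p) => //; rewrite /piece_index pickleK /= /piece.
have -> : admissible p by rewrite /admissible undup_uniq (leq_trans (size_undup _) sS).
split => //; apply/funext => e.
rewrite /affine /piece_scale /piece_shift /= mem_filter mem_undup.
case/andP: ha => a0 _; case/andP: hb => _ b1.
case eS: (e \in S); last by rewrite out ?eS // mul1r addr0.
case: (asboolP (L e)) => Le /=.
  by rewrite inL //; field; rewrite gt_eqF.
by rewrite notL //; field; rewrite subr_eq0 gt_eqF.
Qed.

Lemma fiber_eq_of_pattern x (S : seq E) :
  (forall w, A w -> Phi w = x ->
    (forall e, e \notin S -> w e = x e) /\
    exists L : set E, L `<=` [set e | e \in S] /\
      (forall e, L e -> w e = a^-1 * x e) /\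
      (forall e, e \in S -> ~ L e -> w e = (x e - b) / (1 - b))) ->
  forall w1 w2, A w1 -> A w2 -> Phi w1 = x -> Phi w2 = x ->
  {in S, forall e, (w1 e == a^-1 * x e) = (w2 e == a^-1 * x e)} -> w1 = w2.
Proof.
move=> hx w1 w2 Aw1 Aw2 Pw1 Pw2 same; apply/funext => e.
have fiber_coord w : A w -> Phi w = x -> e \in S -> w e != a^-1 * x e ->
    w e = (x e - b) / (1 - b).
  move=> Aw Pw eS ne; have [_ [L [_ [inL notL]]]] := hx w Aw Pw.
  by apply: notL => // Le; move: ne; rewrite inL // eqxx.
have [eS|eS] := boolP (e \in S); last first.
  by rewrite (hx _ Aw1 Pw1).1 // (hx _ Aw2 Pw2).1.
have := same e eS; have [->|N1] := eqVneq (w1 e) (a^-1 * x e).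
  by move=> /esym/eqP ->.
by move=> /esym/negbT N2; rewrite (fiber_coord w1) ?(fiber_coord w2 Aw2 Pw2 eS N2).
Qed.

Lemma piece_image_multiplicity x n :
  \sum_(k < n) (\1_(piece_image k) x : R) <= (2 ^ s)%:R.
Proof.
rewrite (_ : \sum_(k < n) _ = #|[set k : 'I_n | x \in piece_image k]%SET|%:R :> R);
  last first.
  rewrite -sum1_card natr_sum [RHS]big_mkcond /=; apply: eq_bigr => k _.
  by rewrite indicE inE; case: (x \in _).
rewrite ler_nat.
have [hx|nx] := pselect ((Phi @` A) x); last first.
  rewrite eq_card0 // => k.
  rewrite !inE; apply/negP => /set_mem/piece_imageP[Aw Pw _].
  by apply: nx; exists (Tinv (piece_index k) x).
have [S [sS hS_x]] := hS hx.
pose pattern (k : 'I_n) : {ffun 'I_(size S) -> bool} := [ffun i =>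
  Tinv (piece_index k) x (tnth (in_tuple S) i) == a^-1 * x (tnth (in_tuple S) i)].
have pattern_inj : {in [set k : 'I_n | x \in piece_image k]%SET &, injective pattern}.
  move=> k1 k2; rewrite !inE => /piece_imageP[Aw1 Pw1 D1].
  move=> /piece_imageP[Aw2 Pw2 D2] e12.
  have w12 := fiber_eq_of_pattern hS_x Aw1 Aw2 Pw1 Pw2.
  apply: val_inj; apply: (@trivIset_seqDU _ (piece \o piece_index)) => //.
  exists (Tinv (piece_index k1) x); split => //; rewrite w12 // => e eS.
  have iS : (index e S < size S)%N by rewrite index_mem.
  have := congr1 (fun f : {ffun _ -> bool} => f (Ordinal iS)) e12.
  by rewrite !ffunE (tnth_nth e) /= nth_index.
rewrite -(card_in_imset pattern_inj); apply: (leq_trans (max_card _)).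
by rewrite card_ffun card_bool card_ord leq_pexp2l.
Qed.

End pieces.

Theorem mainTheorem15 (R : realType) (E : countType)
  (P : probability (Omega E R) R) (hP : uniform_product P)
  (A B : set (Omega E R)) (a b : R) (s : nat)
  (Phi : Omega E R -> Omega E R)
  (mA : measurable A) (mB : measurable B)
  (hA : A `<=` @cube E R) (hB : B `<=` @cube E R)
  (ha : 0 < a < 1) (hb : 0 < b < 1)
  (PhiAB : Phi @` A `<=` B) (mPhi : measurable_fun A Phi)
  (hS : forall w', (Phi @` A) w' ->
     exists S : seq E, (size S <= s)%N /\
       forall w, A w -> Phi w = w' ->
         (forall e, e \notin S -> w e = w' e) /\
         exists L : set E, L `<=` [set e | e \in S] /\
           (forall e, L e -> w e = a^-1 * w' e) /\
           (forall e, e \in S -> ~ L e -> w e = (w' e - b) / (1 - b))) :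
  (P A <= ((2 / Num.min a (1 - b)) ^+ s)%:E * P B)%E.
Proof.
have m_gt0 : 0 < Num.min a (1 - b).
  by rewrite lt_min subr_gt0; case/andP: ha => -> _; case/andP: hb.
rewrite (_ : (2 / _) ^+ s = Num.min a (1 - b) ^- s * (2 ^ s)%:R); last first.
  by rewrite natrX exprMn exprVn mulrC.
apply: (measure_le_by_pieces (D := disjoint_piece A a b s Phi)
                             (C := piece_image A a b s Phi)) => //.
- by move=> k; apply: measurable_disjoint_piece.
- exact: trivIset_seqDU.
- by rewrite -seqDU_bigcup_eq; apply: bigcup_piece.
- by rewrite invr_ge0 exprn_ge0 // ltW.
- by move=> k; apply: disjoint_piece_le.
- by move=> k; apply: measurable_piece_image.
- by move=> k; apply: piece_image_sub.
- by move=> x n; apply: piece_image_multiplicity.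
Qed.
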